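(* Let $T\in\mathrm{Aut}(X,\mu)$ be aperiodic and $\varphi$ a metric-compatible function. For every $U\in[T]_\varphi$ and every measurable $A\subseteq X$, one has $d_{\varphi,T}(U_A,\mathrm{id})\le d_{\varphi,T}(U,\mathrm{id})$; in particular $U_A\in[T]_\varphi$.
   Context: $(X,\mu)$ standard atomless probability space; $\mathrm{Aut}(X,\mu)$ measure-preserving transformations modulo null sets. For aperiodic $T$, $[T]$ is the set of $U\in\mathrm{Aut}(X,\mu)$ with $U(x)=T^{c_U(x)}(x)$ a.e. for a measurable $c_U:X\to\mathbb Z$. $\varphi:\mathbb R_+\to\mathbb R_+$ is metric-compatible if subadditive, non-decreasing, $\varphi(0)=0$, $\varphi(t)>0$ for $t>0$. $[T]_\varphi=\{U\in[T]:\int_X\varphi(|c_U|)d\mu<\infty\}$, $d_{\varphi,T}(U,V)=\int_X\varphi(|c_U(x)-c_V(x)|)d\mu$. For $U\in\mathrm{Aut}(X,\mu)$ and measurable $A$, the first return map $U_A$ is defined by $U_A(x)=U^{n(x)}(x)$ with $n(x)=\min\{n\ge1:U^n(x)\in A\}$ for $x\in A$ (defined a.e. by Poincaré recurrence) and $U_A(x)=x$ for $x\notin A$. *)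

From HB Require Import structures.
From mathcomp Require Import all_boot all_order all_algebra.
From mathcomp Require Import all_classical all_reals all_analysis.
Set Implicit Arguments. Unset Strict Implicit. Unset Printing Implicit Defensive.
Import Order.TTheory GRing.Theory Num.Theory.
Local Open Scope classical_set_scope.
Local Open Scope ring_scope.

Section Defs.
Context (d : measure_display) (X : measurableType d) (R : realType).

(* (X, mu) is a standard Borel space: Borel isomorphic to a Borel subset of R *)
Definition standard_borel : Prop :=
  exists f : X -> R, measurable_fun setT f /\ injective f /\
    (forall A : set X, measurable A -> measurable (f @` A)).

Definition atomless (mu : probability X R) : Prop :=
  forall A : set X, measurable A -> (0 < mu A)%E ->
    exists B : set X, [/\ measurable B, B `<=` A, (0 < mu B)%E & (mu B < mu A)%E].

Definition is_aut (mu : probability X R) (T Tinv : X -> X) : Prop :=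
  [/\ measurable_fun setT T, measurable_fun setT Tinv,
      cancel T Tinv, cancel Tinv T &
      forall A : set X, measurable A -> mu (T @^-1` A) = mu A].

Definition Tpow (T Tinv : X -> X) (n : int) : X -> X :=
  match n with
  | Posz k => iter k T
  | Negz k => iter k.+1 Tinv
  end.

Definition aperiodic (mu : probability X R) (T Tinv : X -> X) : Prop :=
  {ae mu, forall x, forall n : int, n != 0 -> Tpow T Tinv n x != x}.

Definition cocycle (mu : probability X R) (T Tinv U : X -> X) (c : X -> int) : Prop :=
  (forall k : int, measurable [set x | c x = k]) /\
  {ae mu, forall x, U x = Tpow T Tinv (c x) x}.

Definition metric_compatible (phi : R -> R) : Prop :=
  [/\ (forall t, 0 <= t -> 0 <= phi t),
      (forall s t, 0 <= s -> 0 <= t -> phi (s + t) <= phi s + phi t),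
      (forall s t, 0 <= s -> s <= t -> phi s <= phi t),
      phi 0 = 0 &
      (forall t, 0 < t -> 0 < phi t)].

(* \int phi(|c|) dmu ; equals d_{phi,T}(U, id) when c is the cocycle of U *)
Definition phi_int (mu : probability X R) (phi : R -> R) (c : X -> int) : \bar R :=
  (\int[mu]_x (phi (`|c x|%:~R))%:E)%E.

(* first return time to A (0 if x never returns) *)
Definition return_time (U : X -> X) (A : set X) (x : X) : nat :=
  match pselect (exists n, ((0 < n)%N && `[< A (iter n U x) >])) with
  | left H => ex_minn H
  | right _ => 0%N
  end.

Definition first_return (U : X -> X) (A : set X) (x : X) : X :=
  if `[< A x >] then iter (return_time U A x) U x else x.

End Defs.

(* If x in A first returns to A after r(x) steps, the cocycle of the first
   return map U_A at x is the Birkhoff sum of c along r(x) steps of the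
   U-orbit, so by subadditivity of phi
     phi |c_A(x)| <= sum_k 1_{C_k}(x) phi |c(U^k x)|,
   where C_k is the set of points of A that do not return to A within k steps.
   Since U preserves mu, the k-th term integrates to the integral of phi |c|
   over U^k C_k, and these sets (the levels of Kac's tower over A) are
   pairwise disjoint; hence the whole sum is at most the integral of phi |c|.
   Aperiodicity of T makes cocycles unique almost everywhere, so the bound
   holds for every cocycle of U_A. *)

From HB Require Import structures.
From mathcomp Require Import all_boot all_order all_algebra.
From mathcomp Require Import all_classical all_reals all_analysis.
From mathcomp Require Import measurable_realfun zify.
Set Implicit Arguments. Unset Strict Implicit. Unset Printing Implicit Defensive.
Import Order.TTheory GRing.Theory Num.Theory.
Local Open Scope classical_set_scope.
Local Open Scope ring_scope.

Section integer_powers.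
Context d (X : measurableType d) (T Tinv : X -> X).
Hypotheses (TK : cancel T Tinv) (TiK : cancel Tinv T).

Lemma TpowD1 (z : int) x : Tpow T Tinv (z + 1) x = T (Tpow T Tinv z x).
Proof.
case: z => [n|[|n]]; first by rewrite /= addn1.
  by rewrite /= TiK.
have -> : Negz n.+1 + 1 = Negz n by rewrite !NegzE; lia.
by rewrite /= TiK.
Qed.

Lemma TpowB1 (z : int) x : Tpow T Tinv (z - 1) x = Tinv (Tpow T Tinv z x).
Proof. by rewrite -{2}(subrK 1 z) TpowD1 TK. Qed.

Lemma TpowD (a b : int) x :
  Tpow T Tinv a (Tpow T Tinv b x) = Tpow T Tinv (a + b) x.
Proof.
case: a => [n|n].
  elim: n => [|n IH]; first by rewrite add0r.
  by rewrite -addn1 PoszD addrAC !TpowD1 IH.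
elim: n => [|n IH].
  have -> : Negz 0 = 0 - 1 by [].
  by rewrite addrAC !TpowB1 add0r.
have -> : Negz n.+1 = Negz n - 1 by rewrite !NegzE; lia.
by rewrite addrAC !TpowB1 IH.
Qed.

End integer_powers.

Lemma measurable_preimageT d d' (X : measurableType d) (Y : measurableType d')
    (f : X -> Y) (B : set Y) :
  measurable_fun setT f -> measurable B -> measurable (f @^-1` B).
Proof. by move=> mf mB; rewrite -[f @^-1` _]setTI; exact: mf. Qed.

Section integer_valued.
Context d (X : measurableType d).

Definition measurable_levels (f : X -> int) := forall k, measurable [set x | f x = k].

Lemma measurable_fun_iter (f : X -> X) k :
  measurable_fun setT f -> measurable_fun setT (iter k f).
Proof.
move=> mf; elim: k => [|k IH]; first exact: measurable_id.
exact: measurableT_comp mf IH.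
Qed.

Lemma measurable_levels_comp d' (Y : measurableType d') (f : X -> int) (F : int -> Y) :
  measurable_levels f -> measurable_fun setT (F \o f).
Proof.
move=> mf _ B mB; rewrite setTI.
pose L k := if `[< B (F k) >] then [set x | f x = k] else set0.
have -> : (F \o f) @^-1` B = \bigcup_k L k.
  apply/seteqP; split=> [x /= Bx|x [k _]]; first by exists (f x); rewrite // /L asboolT.
  by rewrite /L; case: asboolP => // Bk /= ->.
apply: countable_bigcupT_measurable => [|k]; first exact: countableP.
by rewrite /L; case: asboolP.
Qed.

Lemma measurable_levels_cst (k : int) : measurable_levels (fun _ : X => k).
Proof.
move=> z; have [->|kz] := eqVneq k z.
  by rewrite (_ : [set _ | z = z] = setT) //; apply/seteqP; split.
rewrite (_ : [set _ | k = z] = set0) //.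
by apply/seteqP; split=> x //= /eqP; rewrite (negbTE kz).
Qed.

Lemma measurable_levelsD (f g : X -> int) :
  measurable_levels f -> measurable_levels g -> measurable_levels (f \+ g).
Proof.
move=> mf mg z.
have -> : [set x | (f \+ g) x = z] =
    \bigcup_k ([set x | f x = k] `&` [set x | g x = z - k]).
  apply/seteqP; split=> [x /= <-|x [k _ [/= -> ->]]]; last by rewrite addrC subrK.
  by exists (f x) => //; split => //=; rewrite addrC addKr.
apply: countable_bigcupT_measurable => [|k]; first exact: countableP.
exact: measurableI.
Qed.

Lemma measurable_levels_comp_fun (f : X -> int) (g : X -> X) :
  measurable_levels f -> measurable_fun setT g -> measurable_levels (f \o g).
Proof. by move=> mf mg z; exact: (measurable_preimageT mg (mf z)). Qed.

End integer_valued.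

Section return_time.
Context d (X : measurableType d) (U : X -> X) (A : set X).

Variant return_time_spec x : nat -> Prop :=
| ReturnTimeNone of (forall n, (0 < n)%N -> ~ A (iter n U x)) :
    return_time_spec x 0
| ReturnTimeSome m of (0 < m)%N & A (iter m U x) &
    (forall j, (0 < j < m)%N -> ~ A (iter j U x)) : return_time_spec x m.

Lemma return_timeP x : return_time_spec x (return_time U A x).
Proof.
rewrite /return_time; case: pselect => [H|H]; last first.
  by constructor => n n0 An; apply: H; exists n; rewrite n0; exact/asboolP.
case: ex_minnP => m /andP[m0 /asboolP Am] mmin.
constructor => // j /andP[j0 jm] Aj.
by have := mmin j; rewrite j0 asboolT //= leqNgt jm => /(_ isT).
Qed.

Definition avoids k : set X :=
  \bigcap_(j in [set j | (0 < j <= k)%N]) (iter j U @^-1` ~` A).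

Definition no_return k : set X := A `&` avoids k.

Hypotheses (mU : measurable_fun setT U) (mA : measurable A).

Lemma measurable_avoids k : measurable (avoids k).
Proof.
apply: bigcap_measurableType => j _.
exact: measurable_preimageT (measurable_fun_iter _ mU) (measurableC mA).
Qed.

Lemma measurable_no_return k : measurable (no_return k).
Proof. exact: measurableI mA (measurable_avoids k). Qed.

Lemma measurable_return_time_level m :
  measurable [set x | return_time U A x = m].
Proof.
case: m => [|m].
  rewrite (_ : [set x | _ = 0%N] = \bigcap_k avoids k).
    exact: bigcapT_measurable measurable_avoids.
  apply/seteqP; split=> x /=; case: return_timeP => //.
  - by move=> H _ k _ j /andP[j0 _]; exact: H.
  - by move=> m m0 _ _ m_eq0; rewrite m_eq0 in m0.
  - by move=> m m0 Am _ /(_ m I m) /=; rewrite m0 leqnn => /(_ isT).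
rewrite (_ : [set x | _ = m.+1] = avoids m `&` iter m.+1 U @^-1` A).
  apply: measurableI (measurable_avoids m) _.
  exact: measurable_preimageT (measurable_fun_iter _ mU) mA.
apply/seteqP; split=> x /=; case: return_timeP => //.
- (* [j < m.+1] and [j <= m] are convertible, so [nfirst] is [avoids m x]. *)
  by move=> n _ An nfirst n_eq; subst n; split=> //; exact: nfirst.
- by move=> H [_ Am]; case: (H m.+1 isT Am).
- move=> n n0 An nfirst [avoid Am]; case: (ltngtP n m.+1) => [nm|mn|//].
    by have := avoid n; rewrite /= n0 -ltnS nm => /(_ isT).
  by have := nfirst m.+1; rewrite mn => /(_ isT).
Qed.

End return_time.

Section measure_preserving.
Context d (X : measurableType d) (R : realType) (mu : probability X R).
Variables (U Uinv : X -> X) (hU : is_aut mu U Uinv).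

Lemma measurable_fun_aut : measurable_fun setT U.
Proof. by case: hU. Qed.

Lemma measurable_fun_aut_inv : measurable_fun setT Uinv.
Proof. by case: hU. Qed.

Lemma iter_autK k : cancel (iter k U) (iter k Uinv).
Proof.
have [_ _ UK _ _] := hU.
by elim: k => [//|k IH] x; rewrite iterSr /= UK IH.
Qed.

Lemma iter_aut_invK k : cancel (iter k Uinv) (iter k U).
Proof.
have [_ _ _ UiK _] := hU.
by elim: k => [//|k IH] x; rewrite iterSr /= UiK IH.
Qed.

Lemma measure_iter_preimage k B : measurable B -> mu (iter k U @^-1` B) = mu B.
Proof.
have [mU _ _ _ Upres] := hU.
elim: k B => [//|k IH] B mB.
have -> : iter k.+1 U @^-1` B = iter k U @^-1` (U @^-1` B) by [].
by rewrite IH ?Upres //; exact: measurable_preimageT.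
Qed.

Lemma ae_iter (P : X -> Prop) k :
  {ae mu, forall x, P x} -> {ae mu, forall x, P (iter k U x)}.
Proof.
move=> [N [mN N0 PN]]; exists (iter k U @^-1` N); split => //.
- exact: measurable_preimageT (measurable_fun_iter _ measurable_fun_aut) mN.
- by rewrite measure_iter_preimage.
- by move=> x /PN.
Qed.

End measure_preserving.

Section return_cocycle.
Context d (X : measurableType d) (R : realType) (mu : probability X R).
Variables (U Uinv : X -> X) (hU : is_aut mu U Uinv).
Variables (A : set X) (mA : measurable A) (c : X -> int) (mc : measurable_levels c).

Definition birkhoff_sum m x : int := \sum_(k < m) c (iter k U x).

Definition return_cocycle x : int :=
  if `[< A x >] then birkhoff_sum (return_time U A x) x else 0.

Let mU := measurable_fun_aut hU.

Lemma measurable_levels_birkhoff_sum m : measurable_levels (birkhoff_sum m).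
Proof.
elim: m => [|m IH].
  under [birkhoff_sum 0]funext do rewrite /birkhoff_sum big_ord0.
  exact: measurable_levels_cst.
under [birkhoff_sum m.+1]funext do rewrite /birkhoff_sum big_ord_recr.
apply: measurable_levelsD IH _.
exact: measurable_levels_comp_fun mc (measurable_fun_iter _ mU).
Qed.

Lemma measurable_levels_return_cocycle : measurable_levels return_cocycle.
Proof.
move=> z; have -> : [set x | return_cocycle x = z] = (~` A `&` [set _ | 0 = z]) `|`
    \bigcup_m (A `&` [set x | return_time U A x = m] `&` [set x | birkhoff_sum m x = z]).
  apply/seteqP; split=> x; rewrite /return_cocycle /=; case: asboolP => Ax.
  - by move=> <-; right; exists (return_time U A x).
  - by move=> <-; left.
  - by move=> [[] // | [m _ [[_ /= ->]]]].
  - by move=> [[_ ->] // | [m _ [[]]]].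
apply: measurableU.
  exact: measurableI (measurableC mA) (measurable_levels_cst _ _ z).
apply: bigcupT_measurable => m; apply: measurableI (measurable_levels_birkhoff_sum m z).
exact: measurableI mA (measurable_return_time_level mU mA m).
Qed.

Variables (T Tinv : X -> X) (TK : cancel T Tinv) (TiK : cancel Tinv T).

Lemma ae_iter_birkhoff_sum : {ae mu, forall x, U x = Tpow T Tinv (c x) x} ->
  {ae mu, forall x m, iter m U x = Tpow T Tinv (birkhoff_sum m x) x}.
Proof.
move=> hc; have := ae_foralln (fun k => ae_iter hU k hc).
apply: filterS => x hx m; elim: m => [|m IH]; first by rewrite /birkhoff_sum big_ord0.
by rewrite iterS hx {2}IH TpowD // /birkhoff_sum big_ord_recr /= addrC.
Qed.

Lemma cocycle_first_return : cocycle mu T Tinv U c ->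
  cocycle mu T Tinv (first_return U A) return_cocycle.
Proof.
move=> [_ hc]; split; first exact: measurable_levels_return_cocycle.
apply: filterS (ae_iter_birkhoff_sum hc) => x hx.
by rewrite /first_return /return_cocycle; case: asboolP.
Qed.

End return_cocycle.

Lemma cocycle_ae_unique d (X : measurableType d) (R : realType) (mu : probability X R)
    (T Tinv V : X -> X) (c1 c2 : X -> int) :
  cancel T Tinv -> cancel Tinv T -> aperiodic mu T Tinv ->
  cocycle mu T Tinv V c1 -> cocycle mu T Tinv V c2 -> {ae mu, forall x, c1 x = c2 x}.
Proof.
move=> TK TiK haper [_ h1] [_ h2].
apply: filterS3 haper h1 h2 => x ap e1 e2.
have fixed : Tpow T Tinv (c1 x - c2 x) x == x.
  by rewrite addrC -TpowD // -e1 e2 TpowD // addNr.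
by apply/eqP; rewrite -subr_eq0; exact: contraLR (ap _) fixed.
Qed.

Section phi_abs.
Context (R : realType) (phi : R -> R) (hphi : metric_compatible phi).

Definition phi_abs (z : int) : \bar R := (phi `|z|%:~R)%:E.

Local Open Scope ereal_scope.

Lemma phi_abs_ge0 z : 0 <= phi_abs z.
Proof. by case: hphi => phi_ge0 _ _ _ _; rewrite lee_fin phi_ge0 // ler0z. Qed.

Lemma phi_abs0 : phi_abs 0 = 0.
Proof. by case: hphi => _ _ _ phi0 _; rewrite /phi_abs normr0 phi0. Qed.

Lemma phi_absD a b : phi_abs (a + b)%R <= phi_abs a + phi_abs b.
Proof.
case: hphi => _ phiD phi_nd _ _; rewrite /phi_abs -EFinD lee_fin.
apply: le_trans (phiD _ _ _ _); rewrite ?ler0z //.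
by apply: phi_nd; rewrite ?ler0z // -intrD ler_int ler_normD.
Qed.

Lemma phi_abs_sum m (a : nat -> int) :
  phi_abs (\sum_(k < m) a k)%R <= \sum_(k < m) phi_abs (a k).
Proof.
elim: m => [|m IH]; first by rewrite !big_ord0 phi_abs0.
by rewrite !big_ord_recr /=; apply: le_trans (phi_absD _ _) (leeD IH _).
Qed.

End phi_abs.

Lemma measurable_phi_abs d (X : measurableType d) (R : realType) (phi : R -> R)
    (f : X -> int) :
  measurable_levels f -> measurable_fun setT (fun x => phi_abs phi (f x)).
Proof. exact: measurable_levels_comp. Qed.

Lemma phi_int_ae_eq d (X : measurableType d) (R : realType) (mu : probability X R)
    (phi : R -> R) (c1 c2 : X -> int) :
  measurable_levels c1 -> measurable_levels c2 -> {ae mu, forall x, c1 x = c2 x} ->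
  phi_int mu phi c1 = phi_int mu phi c2.
Proof.
move=> mc1 mc2 c12; apply: ae_eq_integral => //; [exact: measurable_phi_abs..|].
by apply: filterS c12 => x /= ->.
Qed.

Section integral_return_cocycle.
Context d (X : measurableType d) (R : realType) (mu : probability X R).
Variables (U Uinv : X -> X) (hU : is_aut mu U Uinv).
Variables (A : set X) (mA : measurable A) (c : X -> int) (mc : measurable_levels c).
Variables (phi : R -> R) (hphi : metric_compatible phi).
Local Open Scope ereal_scope.

Let mU := measurable_fun_aut hU.

Definition return_term k :=
  (fun x => phi_abs phi (c (iter k U x))) \_ (no_return U A k).

Lemma return_term_ge0 k x : 0 <= return_term k x.
Proof. by rewrite /return_term /patch; case: ifP => // _; exact: phi_abs_ge0. Qed.

Lemma measurable_return_term k : measurable_fun setT (return_term k).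
Proof.
apply/(measurable_restrictT _ (measurable_no_return mU mA k)); apply: measurable_funTS.
exact/measurable_phi_abs/measurable_levels_comp_fun/measurable_fun_iter.
Qed.

Lemma phi_abs_return_cocycle_le x :
  phi_abs phi (return_cocycle U A c x) <= \sum_(k <oo) return_term k x.
Proof.
rewrite /return_cocycle; case: asboolP => Ax; last first.
  by rewrite phi_abs0 //; apply: nneseries_ge0 => k _ _; exact: return_term_ge0.
apply: (le_trans (phi_abs_sum hphi (return_time U A x) (fun k => c (iter k U x)))).
apply: le_trans
  (nneseries_lim_ge (return_time U A x) (fun k _ _ => return_term_ge0 k x)).
rewrite big_mkord; apply: lee_sum => -[k /= kr] _.
rewrite /return_term /patch mem_set //.
move: kr; case: (return_timeP U A x) => // m _ _ mfirst km.
split=> // j /andP[j0 jk].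
by apply: mfirst; rewrite j0 (leq_ltn_trans jk).
Qed.

Definition tower k := iter k Uinv @^-1` no_return U A k.

Lemma measurable_tower k : measurable (tower k).
Proof.
apply: measurable_preimageT (measurable_no_return mU mA k).
exact/measurable_fun_iter/(measurable_fun_aut_inv hU).
Qed.

(* A point y of [tower i] and [tower j], i < j, would be U^j of a point of A
   avoiding A for j steps, which nevertheless visits A (at U^-i y) at step j - i. *)
Lemma trivIset_tower : trivIset setT tower.
Proof.
suff tower_disj i j y : (i < j)%N -> tower i y -> tower j y -> False.
  move=> i j _ _ [y [yi yj]].
  by case: (ltngtP i j) => // ij; [case: (tower_disj i j y) | case: (tower_disj j i y)].
move=> ij [Ai _] [_ avoid].
apply: (avoid (j - i)%N); first by rewrite /= subn_gt0 ij leq_subr.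
have -> : iter j Uinv y = iter (j - i) Uinv (iter i Uinv y).
  by rewrite -iterD subnK // ltnW.
by rewrite /= (iter_aut_invK hU).
Qed.

Lemma integral_return_term k :
  \int[mu]_x return_term k x = \int[mu]_(y in tower k) phi_abs phi (c y).
Proof.
have mk := measurable_fun_iter k mU.
have no_return_tower : no_return U A k = iter k U @^-1` tower k.
  by apply/seteqP; split=> x /=; rewrite /tower /= (iter_autK hU).
rewrite -integral_mkcond no_return_tower.
transitivity (\int[pushforward mu (iter k U)]_(y in tower k) phi_abs phi (c y)).
  rewrite ge0_integral_pushforward //; first exact: measurable_tower.
  - exact/measurable_funTS/measurable_phi_abs.
  - by move=> y _; exact: phi_abs_ge0.
apply: eq_measure_integral => // B mB _.
by rewrite /= /pushforward (measure_iter_preimage hU).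
Qed.

Lemma integral_return_cocycle_le :
  \int[mu]_x phi_abs phi (return_cocycle U A c x) <= \int[mu]_x phi_abs phi (c x).
Proof.
apply: le_trans (_ : \int[mu]_x \sum_(k <oo) return_term k x <= _).
  apply: ge0_le_integral => //.
  - by move=> x _; exact: phi_abs_ge0.
  - exact/measurable_phi_abs/(measurable_levels_return_cocycle hU mA mc).
  - apply: ge0_emeasurable_sum => [k x _ _|k _]; first exact: return_term_ge0.
    exact: measurable_return_term.
  - by move=> x _; exact: phi_abs_return_cocycle_le.
rewrite integral_nneseries //; last 2 first.
- exact: measurable_return_term.
- by move=> k x _; exact: return_term_ge0.
rewrite (eq_eseriesr (fun k _ => integral_return_term k)).
rewrite -ge0_integral_bigcup //; first last.
- exact: trivIset_tower.
- by move=> y _; exact: phi_abs_ge0.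
- exact/measurable_funTS/measurable_phi_abs.
- exact: measurable_tower.
apply: ge0_subset_integral => //; first exact: bigcupT_measurable measurable_tower.
- exact: measurable_phi_abs.
- by move=> y _; exact: phi_abs_ge0.
Qed.

End integral_return_cocycle.

Theorem mainTheorem14 (d : measure_display) (X : measurableType d) (R : realType)
  (mu : probability X R)
  (hstd : standard_borel X R) (hatom : atomless mu)
  (T Tinv : X -> X) (hT : is_aut mu T Tinv) (haper : aperiodic mu T Tinv)
  (phi : R -> R) (hphi : metric_compatible phi)
  (U Uinv : X -> X) (hU : is_aut mu U Uinv)
  (c : X -> int) (hc : cocycle mu T Tinv U c) (hcfin : (phi_int mu phi c < +oo)%E)
  (A : set X) (hA : measurable A) :
  (exists cA : X -> int,
      cocycle mu T Tinv (first_return U A) cA /\ (phi_int mu phi cA < +oo)%E) /\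
  (forall cA : X -> int, cocycle mu T Tinv (first_return U A) cA ->
      (phi_int mu phi cA <= phi_int mu phi c)%E).
Proof.
have [_ _ TK TiK _] := hT.
have [mc _] := hc.
have cocycleA := cocycle_first_return hU hA mc TK TiK hc.
have le_c : (phi_int mu phi (return_cocycle U A c) <= phi_int mu phi c)%E.
  exact: (integral_return_cocycle_le hU hA mc hphi).
split; first by exists (return_cocycle U A c); split; last exact: le_lt_trans le_c hcfin.
move=> cA hcA; rewrite (phi_int_ae_eq phi hcA.1 cocycleA.1) //.
exact: cocycle_ae_unique TK TiK haper hcA cocycleA.
Qed.
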